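(* Let $\mathcal{S}\subset\mathbb{R}^n$ be compact convex with $\|x\|\le D$ for all $x\in\mathcal{S}$, and let $f_t(\theta)=\frac12\|\theta-y_t\|^2$ with $y_t\in\mathcal{S}$, $t=1,\dots,T$. Let $\theta_1\in\mathcal{S}$ and define, for $\gamma\in(0,1)$, $$\theta_{t+1}=\frac{\gamma-\gamma^t}{1-\gamma^t}\theta_t+\frac{1-\gamma}{1-\gamma^t}y_t=\theta_t-\frac{1-\gamma}{1-\gamma^t}\nabla f_t(\theta_t).$$ Let $\theta_t^*=\operatorname{argmin}_{\theta\in\mathcal{S}}f_t(\theta)\,(=y_t)$ and $V^*=\sum_{t=2}^T\|\theta_t^*-\theta_{t-1}^*\|$. If $1-\gamma=1/T^\beta$ with $\beta\in(0,1)$, then $$\sum_{t=1}^T\big(f_t(\theta_t)-f_t(\theta_t^* )\big)\le 2DT^\beta\big(\|\theta_1-\theta_1^*\|+V^*\big).$$ *)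

From HB Require Import structures.
From mathcomp Require Import all_boot all_order all_algebra.
From mathcomp Require Import all_classical all_reals all_analysis.
Set Implicit Arguments. Unset Strict Implicit. Unset Printing Implicit Defensive.
Import Order.TTheory GRing.Theory Num.Theory.
Import numFieldNormedType.Exports.
Local Open Scope ring_scope.

Definition edot (R : realType) (n : nat) (x y : 'rV[R]_n) : R :=
  \sum_(i < n) x ord0 i * y ord0 i.

Definition enorm (R : realType) (n : nat) (x : 'rV[R]_n) : R :=
  Num.sqrt (edot x x).

Definition sqloss (R : realType) (n : nat) (y theta : 'rV[R]_n) : R :=
  2^-1 * enorm (theta - y) ^+ 2.

(* Since y_t lies in S, the minimiser theta*_t is y_t itself, so the regret is
   the sum of 1/2 e_t^2 with e_t = ||theta_t - y_t||.  The update puts weight at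
   most gamma on theta_t in a convex combination of theta_t and y_t.  Hence the
   iterates stay in the D-ball, so e_t <= 2D and 1/2 e_t^2 <= D e_t, and
   e_(t+1) <= gamma e_t + ||y_(t+1) - y_t||.  Summing the latter gives
   (1 - gamma) sum_t e_t <= e_1 + V with V the path length of the y_t, and
   1 - gamma = T^(-beta); this even yields the bound D T^beta (e_1 + V). *)

From HB Require Import structures.
From mathcomp Require Import all_boot all_order all_algebra.
From mathcomp Require Import all_classical all_reals all_analysis.
From mathcomp Require Import ring lra.
Import Order.TTheory GRing.Theory Num.Theory.
Import numFieldNormedType.Exports.
Local Open Scope classical_set_scope.
Local Open Scope ring_scope.

Section EuclideanNorm.
Context {R : realType} {n : nat}.
Implicit Types (x y z : 'rV[R]_n) (c : R).

Lemma edotC x y : edot x y = edot y x.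
Proof. by apply: eq_bigr => i _; rewrite mulrC. Qed.

Lemma edotDl x y z : edot (x + y) z = edot x z + edot y z.
Proof. by rewrite /edot -big_split; apply: eq_bigr => i _; rewrite mxE mulrDl. Qed.

Lemma edotZl c x y : edot (c *: x) y = c * edot x y.
Proof. by rewrite /edot mulr_sumr; apply: eq_bigr => i _; rewrite mxE mulrA. Qed.

Lemma edot0l y : edot 0 y = 0.
Proof. by rewrite /edot big1 // => i _; rewrite mxE mul0r. Qed.

Lemma edotxx_ge0 x : 0 <= edot x x.
Proof. by apply: sumr_ge0 => i _; rewrite -expr2 sqr_ge0. Qed.

Lemma edotxx_eq0 x : edot x x = 0 -> x = 0.
Proof.
move=> /eqP; rewrite psumr_eq0 => [/allP x0|i _]; last by rewrite -expr2 sqr_ge0.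
apply/rowP => i; rewrite mxE; apply/eqP.
by have /implyP/(_ isT) := x0 i (mem_index_enum _); rewrite mulf_eq0 orbb.
Qed.

Lemma enorm_ge0 x : 0 <= enorm x.
Proof. exact: sqrtr_ge0. Qed.

Lemma enorm_sqr x : enorm x ^+ 2 = edot x x.
Proof. by rewrite sqr_sqrtr // edotxx_ge0. Qed.

Lemma enorm_eq0 x : enorm x = 0 -> x = 0.
Proof. by move=> x0; apply: edotxx_eq0; rewrite -enorm_sqr x0 expr0n. Qed.

Lemma enorm0 : enorm (0 : 'rV[R]_n) = 0.
Proof. by rewrite /enorm edot0l sqrtr0. Qed.

Lemma enormZ c x : enorm (c *: x) = `|c| * enorm x.
Proof.
by rewrite /enorm edotZl edotC edotZl mulrA -expr2 sqrtrM ?sqr_ge0 // sqrtr_sqr.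
Qed.

Lemma enormN x : enorm (- x) = enorm x.
Proof. by rewrite -scaleN1r enormZ normrN normr1 mul1r. Qed.

Lemma edot_le_enormM x y : edot x y <= enorm x * enorm y.
Proof.
have [x0|x_neq0] := eqVneq x 0.
  by rewrite x0 edot0l enorm0 mul0r.
have [y0|y_neq0] := eqVneq y 0.
  by rewrite y0 edotC edot0l enorm0 mulr0.
set a := enorm x; set b := enorm y.
have a_gt0 : 0 < a by rewrite lt0r enorm_ge0 andbT; apply: contra_neq x_neq0 => /enorm_eq0.
have b_gt0 : 0 < b by rewrite lt0r enorm_ge0 andbT; apply: contra_neq y_neq0 => /enorm_eq0.
have expand : edot (b *: x - a *: y) (b *: x - a *: y)
    = 2 * (a * b) * (a * b - edot x y).
  rewrite -scaleNr !edotDl !(edotC _ (_ + _)) !edotDl !edotZl.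
  rewrite !(edotC _ (_ *: _)) !edotZl -!enorm_sqr (edotC y x) -/a -/b; ring.
have := edotxx_ge0 (b *: x - a *: y); rewrite expand pmulr_rge0 ?subr_ge0 //.
by rewrite mulr_gt0 ?mulr_gt0.
Qed.

Lemma enormD x y : enorm (x + y) <= enorm x + enorm y.
Proof.
rewrite -ler_sqr ?nnegrE ?addr_ge0 ?enorm_ge0 // enorm_sqr sqrrD !enorm_sqr.
rewrite edotDl !(edotC _ (_ + _)) !edotDl (edotC y x).
by have := edot_le_enormM x y; lra.
Qed.

End EuclideanNorm.

Lemma sum_contraction_le {R : realDomainType} (g : R) (e d : nat -> R) (T : nat) :
  0 <= g -> (forall t, 0 <= e t) ->
  (forall t, (1 <= t < T)%N -> e t.+1 <= g * e t + d t.+1) ->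
  (1 - g) * \sum_(1 <= t < T.+1) e t <= e 1%N + \sum_(2 <= t < T.+1) d t.
Proof.
move=> g0 e0; case: T => [_|T e_next]; first by rewrite !big_geq // mulr0 addr0.
have sum_next : \sum_(1 <= t < T.+1) e t.+1
    <= g * \sum_(1 <= t < T.+1) e t + \sum_(2 <= t < T.+2) d t.
  rewrite (big_add1 _ _ 1%N) /= mulr_sumr -big_split /=.
  by apply: ler_sum_nat => t /andP[t1 tT]; apply: e_next; rewrite t1.
have E_first : \sum_(1 <= t < T.+2) e t = e 1%N + \sum_(1 <= t < T.+1) e t.+1.
  by rewrite big_nat_recl.
have E_last : \sum_(1 <= t < T.+2) e t = \sum_(1 <= t < T.+1) e t + e T.+1.
  by rewrite big_nat_recr.
rewrite mulrBl mul1r {1}E_first E_last mulrDr.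
by have := mulr_ge0 g0 (e0 T.+1); lra.
Qed.

Section Tracking.
Context {R : realType} {n : nat}.
Implicit Types (x y theta : 'rV[R]_n) (c g D : R).

Lemma sqlossxx y : sqloss y y = 0.
Proof. by rewrite /sqloss subrr enorm0 expr0n mulr0. Qed.

Lemma sqloss_minimizer_eq y x : sqloss y x <= sqloss y y -> x = y.
Proof.
rewrite sqlossxx /sqloss pmulr_rle0 ?invr_gt0 // => le0.
apply/eqP; rewrite -subr_eq0; apply/eqP/enorm_eq0/eqP.
by rewrite -sqrf_eq0 eq_le le0 sqr_ge0.
Qed.

Lemma sqloss_le y theta D : enorm theta <= D -> enorm y <= D ->
  sqloss y theta <= D * enorm (theta - y).
Proof.
move=> thetaD yD; have := enormD theta (- y); rewrite enormN.
by have := enorm_ge0 (theta - y); rewrite /sqloss; nra.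
Qed.

Lemma enorm_convex_le c x y D : 0 <= c <= 1 -> enorm x <= D -> enorm y <= D ->
  enorm (c *: x + (1 - c) *: y) <= D.
Proof.
move=> /andP[c0 c1] xD yD; apply: le_trans (enormD _ _) _.
rewrite !enormZ !ger0_norm ?subr_ge0 //.
have c1' : 0 <= 1 - c by rewrite subr_ge0.
by have := ler_wpM2l c0 xD; have := ler_wpM2l c1' yD; lra.
Qed.

Lemma enorm_convex_step_le c g theta y y' : 0 <= c <= g ->
  enorm (c *: theta + (1 - c) *: y - y') <= g * enorm (theta - y) + enorm (y' - y).
Proof.
move=> /andP[c0 cg].
have -> : c *: theta + (1 - c) *: y - y' = c *: (theta - y) + - (y' - y).
  by rewrite scalerBl scale1r scalerBr opprB !addrA (addrAC (c *: theta)).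
apply: le_trans (enormD _ _) _; rewrite enormZ enormN ger0_norm // lerD2r.
by rewrite ler_wpM2r ?enorm_ge0.
Qed.

Lemma convex_iterates_enorm_le (w : nat -> R) (theta y : nat -> 'rV[R]_n) D T :
  (forall t, (1 <= t < T)%N -> 0 <= w t <= 1) ->
  (forall t, (1 <= t < T)%N -> theta t.+1 = w t *: theta t + (1 - w t) *: y t) ->
  enorm (theta 1%N) <= D -> (forall t, (1 <= t < T)%N -> enorm (y t) <= D) ->
  forall t, (1 <= t <= T)%N -> enorm (theta t) <= D.
Proof.
move=> w01 theta_next theta1D yD; elim=> [//|[_ _ //|t IH]] /andP[_ tT].
rewrite theta_next ?tT //; apply: enorm_convex_le; first exact: w01.
  exact: IH (ltnW tT).
exact: yD.
Qed.

End Tracking.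

Definition discount_weight {R : realFieldType} (g : R) (t : nat) : R :=
  (g - g ^+ t) / (1 - g ^+ t).

Section DiscountWeight.
Variables (R : realFieldType) (g : R) (t : nat).
Hypotheses (g01 : 0 < g < 1) (t_gt0 : (0 < t)%N).

Let gt_lt1 : g ^+ t < 1.
Proof. by case/andP: g01 => g0 g1; rewrite exprn_ilt1 ?ltW // -lt0n. Qed.

Lemma discount_weight_bounds : 0 <= discount_weight g t <= g.
Proof.
case/andP: g01 => g0 g1; have gt_le : g ^+ t <= g.
  by case: t t_gt0 => // k _; rewrite exprS ler_piMr ?exprn_ile1 ?ltW.
have den_gt0 : 0 < 1 - g ^+ t by rewrite subr_gt0.
rewrite /discount_weight divr_ge0 ?(ltW den_gt0) ?subr_ge0 //= ler_pdivrMr //.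
by have := exprn_ge0 t (ltW g0); nra.
Qed.

Lemma discount_weightC : 1 - discount_weight g t = (1 - g) / (1 - g ^+ t).
Proof.
have den_neq0 : 1 - g ^+ t != 0 by rewrite subr_eq0 eq_sym lt_eqF.
by rewrite /discount_weight; field.
Qed.

End DiscountWeight.

Section DiscountedAverage.
Context {R : realType} {n : nat} {g D : R} {T : nat} {theta y : nat -> 'rV[R]_n}.
Hypotheses (g01 : 0 < g < 1)
  (theta_next : forall t, (1 <= t <= T)%N ->
     theta t.+1 = ((g - g ^+ t) / (1 - g ^+ t)) *: theta t
                  + ((1 - g) / (1 - g ^+ t)) *: y t).

Let w := discount_weight g.

Let w_bounds t : (0 < t)%N -> 0 <= w t <= g.
Proof. exact: discount_weight_bounds. Qed.

Let theta_nextE t : (1 <= t <= T)%N -> theta t.+1 = w t *: theta t + (1 - w t) *: y t.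
Proof. by move=> /[dup] /andP[t_gt0 _] tT; rewrite theta_next // discount_weightC. Qed.

Lemma discounted_iterates_enorm_le : enorm (theta 1%N) <= D ->
  (forall t, (1 <= t <= T)%N -> enorm (y t) <= D) ->
  forall t, (1 <= t <= T)%N -> enorm (theta t) <= D.
Proof.
move=> theta1D yD; apply: (convex_iterates_enorm_le w) => // t /andP[t_gt0 tT].
- have /andP[-> w_le] := w_bounds t t_gt0.
  by rewrite (le_trans w_le) // ltW //; case/andP: g01.
- by rewrite theta_nextE // t_gt0 ltnW.
- by rewrite yD // t_gt0 ltnW.
Qed.

Lemma discounted_tracking_sum_le :
  (1 - g) * \sum_(1 <= t < T.+1) enorm (theta t - y t)
    <= enorm (theta 1%N - y 1%N) + \sum_(2 <= t < T.+1) enorm (y t - y t.-1).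
Proof.
apply: sum_contraction_le => [||t /andP[t_gt0 tT]]; first by case/andP: g01 => /ltW.
  by move=> t; apply: enorm_ge0.
rewrite theta_nextE; last by rewrite t_gt0 ltnW.
exact: enorm_convex_step_le (w_bounds t t_gt0).
Qed.

Lemma discounted_sqloss_sum_le : enorm (theta 1%N) <= D ->
  (forall t, (1 <= t <= T)%N -> enorm (y t) <= D) ->
  \sum_(1 <= t < T.+1) sqloss (y t) (theta t)
    <= D * \sum_(1 <= t < T.+1) enorm (theta t - y t).
Proof.
move=> theta1D yD; rewrite mulr_sumr; apply: ler_sum_nat => t tT.
by apply: sqloss_le; [exact: discounted_iterates_enorm_le|exact: yD].
Qed.

End DiscountedAverage.

Theorem theorem3p2 (R : realType) (n : nat) (S : set 'rV[R]_n) (D : R)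
  (T : nat) (y : nat -> 'rV[R]_n) (theta thetastar : nat -> 'rV[R]_n)
  (gamma beta : R) :
  compact S ->
  convex_set (S : set (convex_lmodType 'rV[R]_n)) ->
  (forall x, S x -> enorm x <= D) ->
  (forall t, (1 <= t <= T)%N -> S (y t)) ->
  S (theta 1%N) ->
  0 < gamma < 1 ->
  (forall t, (1 <= t <= T)%N ->
     theta t.+1 = ((gamma - gamma ^+ t) / (1 - gamma ^+ t)) *: theta t
                  + ((1 - gamma) / (1 - gamma ^+ t)) *: y t) ->
  (forall t, (1 <= t <= T)%N ->
     S (thetastar t) /\
     forall th, S th -> sqloss (y t) (thetastar t) <= sqloss (y t) th) ->
  0 < beta < 1 ->
  1 - gamma = (T%:R) `^ (- beta) ->
  \sum_(1 <= t < T.+1) (sqloss (y t) (theta t) - sqloss (y t) (thetastar t))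
    <= 2 * D * (T%:R) `^ beta *
       (enorm (theta 1%N - thetastar 1%N)
        + \sum_(2 <= t < T.+1) enorm (thetastar t - thetastar t.-1)).
Proof.
move=> _ _ S_le y_in theta1_in gamma01 theta_next argmin /andP[beta_gt0 _] gammaE.
have thetastarE t : (1 <= t <= T)%N -> thetastar t = y t.
  by move=> tT; have [_ min_t] := argmin t tT; exact/sqloss_minimizer_eq/min_t/y_in.
have T_gt0 : (0 < T)%N.
  case: T gammaE {theta_next argmin y_in thetastarE} => // gammaE; exfalso.
  by move: gamma01 gammaE; rewrite powR0 ?oppr_eq0 ?gt_eqF //; lra.
have -> : \sum_(1 <= t < T.+1) (sqloss (y t) (theta t) - sqloss (y t) (thetastar t))
    = \sum_(1 <= t < T.+1) sqloss (y t) (theta t).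
  by apply: eq_big_nat => t tT; rewrite thetastarE // sqlossxx subr0.
have -> : \sum_(2 <= t < T.+1) enorm (thetastar t - thetastar t.-1)
    = \sum_(2 <= t < T.+1) enorm (y t - y t.-1).
  apply: eq_big_nat => t /andP[t_gt1]; rewrite ltnS => tT.
  by rewrite !thetastarE ?ltn_predRL ?t_gt1 ?(ltnW t_gt1) ?(leq_trans (leq_pred t)).
rewrite thetastarE ?T_gt0 //.
have y_le t : (1 <= t <= T)%N -> enorm (y t) <= D by move/y_in/S_le.
apply: le_trans (discounted_sqloss_sum_le gamma01 theta_next (S_le _ theta1_in) y_le) _.
have P_gamma : T%:R `^ beta * (1 - gamma) = 1.
  by rewrite gammaE powRN mulfV // gt_eqF // powR_gt0 // ltr0n.
have DP_ge0 : 0 <= D * T%:R `^ beta.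
  by rewrite mulr_ge0 ?powR_ge0 // (le_trans (enorm_ge0 _) (S_le _ theta1_in)).
set E := \sum_(1 <= t < T.+1) _.
have -> : D * E = D * T%:R `^ beta * ((1 - gamma) * E).
  by rewrite mulrA -(mulrA D) P_gamma mulr1.
apply: le_trans (ler_wpM2l DP_ge0 (discounted_tracking_sum_le gamma01 theta_next)) _.
have V_ge0 : 0 <= \sum_(2 <= t < T.+1) enorm (y t - y t.-1).
  by apply: sumr_ge0 => t _; apply: enorm_ge0.
by have := mulr_ge0 DP_ge0 (addr_ge0 (enorm_ge0 (theta 1%N - y 1%N)) V_ge0); lra.
Qed.
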